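(* Let $V$ be a toroidal vertex algebra. If $(W,Y_W)$ is a $V$-module, then $(W,Y_W')$ is a $V^0$-module (for $V^0$ viewed as a toroidal vertex algebra), where $Y_W'$ is the restriction of $Y_W$ to $V^0$, and it satisfies the condition: for every $v\in V$ and $w\in W$ there exists an integer $k$ such that $$x_0^{k}\,Y_W'(v_{-1,\mathbf{m}}\mathbf{1};x_0,\mathbf{x})w\in \mathbf{x}^{-\mathbf{m}}W[[x_0]]\quad\text{for all }\mathbf{m}\in\mathbb{Z}^r. \qquad( * )$$ Conversely, if $(W,Y_W')$ is a $V^0$-module satisfying condition $( * )$, then $(W,Y_W)$ is a $V$-module, where $$Y_W(v;x_0,\mathbf{x})=\sum_{\mathbf{m}\in\mathbb{Z}^r}Y_W'(v_{-1,\mathbf{m}}\mathbf{1};x_0,\mathbf{x})\quad\text{for }v\in V.$$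
   Context: Fix a positive integer $r$. Write $\mathbf{x}=(x_1,\dots,x_r)$, $\mathbf{x}^{\mathbf{m}}=x_1^{m_1}\cdots x_r^{m_r}$ for $\mathbf{m}\in\mathbb{Z}^r$ (similarly for other variables), $\mathbf{z}\mathbf{y}=(z_1y_1,\dots,z_ry_r)$. For a vector space $W$ put $\mathcal{E}(W,r)=\mathrm{Hom}(W,W[[x_1^{\pm1},\dots,x_r^{\pm1}]]((x_0)))$. A toroidal vertex algebra is a vector space $V$ with a linear map $Y(\cdot;x_0,\mathbf{x}):V\to\mathcal{E}(V,r)$, $v\mapsto\sum_{(m_0,\mathbf{m})\in\mathbb{Z}\times\mathbb{Z}^r}v_{m_0,\mathbf{m}}x_0^{-m_0-1}\mathbf{x}^{-\mathbf{m}}$, and a vector $\mathbf{1}$ with $Y(\mathbf{1};x_0,\mathbf{x})v=v$, $Y(v;x_0,\mathbf{x})\mathbf{1}\in V[[x_0,x_1^{\pm1},\dots,x_r^{\pm1}]]$ for all $v$, and the Jacobi identity $$z_0^{-1}\delta\!\left(\tfrac{x_0-y_0}{z_0}\right)Y(u;x_0,\mathbf{z}\mathbf{y})Y(v;y_0,\mathbf{y})-z_0^{-1}\delta\!\left(\tfrac{y_0-x_0}{-z_0}\right)Y(v;y_0,\mathbf{y})Y(u;x_0,\mathbf{z}\mathbf{y})=y_0^{-1}\delta\!\left(\tfrac{x_0-z_0}{y_0}\right)Y(Y(u;z_0,\mathbf{z})v;y_0,\mathbf{y})$$ for all $u,v\in V$, where $Y(u;x_0,\mathbf{z}\mathbf{y})=\sum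 u_{m_0,\mathbf{m}}x_0^{-m_0-1}\mathbf{z}^{-\mathbf{m}}\mathbf{y}^{-\mathbf{m}}$. A module for a toroidal vertex algebra $V$ is a vector space $W$ with a linear map $Y_W:V\to\mathcal{E}(W,r)$, $Y_W(\mathbf{1};x_0,\mathbf{x})=1_W$, satisfying the Jacobi identity with $Y$ replaced by $Y_W$ in the three outer operator places. $V^0=\mathrm{span}\{v_{m_0,\mathbf{m}}\mathbf{1}\}$ is a toroidal vertex subalgebra of $V$. *)

From HB Require Import structures.
From mathcomp Require Import all_boot all_order all_algebra.
Set Implicit Arguments. Unset Strict Implicit. Unset Printing Implicit Defensive.
Import Order.TTheory GRing.Theory Num.Theory.
Local Open Scope ring_scope.

Definition idx (r : nat) := 'rV[int]_r.

Definition zbin (n : int) (i : nat) : int :=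
  divz (\prod_(j < i) (n - (nat_of_ord j)%:Z)) (i`!)%:Z.

Section Defs.
Variables (K : fieldType) (r : nat).

(* A "vertex operator map" Y : V -> E(W,r), given by its coefficients:
   Y v n m w = v_{n,m} w, the coefficient of x0^{-n-1} x^{-m} in Y(v;x0,x)w. *)
Definition vop (V W : lmodType K) := V -> int -> idx r -> W -> W.

Definition coef_linear (V W : lmodType K) (Y : vop V W) (P : V -> Prop) :=
  (forall u v a n m w, P u -> P v ->
      Y (a *: u + v) n m w = a *: Y u n m w + Y v n m w) /\
  (forall v n m a w w', P v ->
      Y v n m (a *: w + w') = a *: Y v n m w + Y v n m w').

(* Y(v;x0,x)w lies in W[[x^{+-1}]]((x0)) *)
Definition truncated (V W : lmodType K) (Y : vop V W) (P : V -> Prop) :=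
  forall v w, P v -> exists N : int, forall n m, N <= n -> Y v n m w = 0.

Definition vacuum_id (V W : lmodType K) (Y : vop V W) (one : V) :=
  forall n m w, Y one n m w = if (n == -1) && (m == 0) then w else 0.

(* The Jacobi identity, for u, v in P: equality of the coefficients of
   z0^{-l-1} x0^{-a-1} y0^{-b-1} z^{-m} y^{-p} of the three terms, obtained by
   expanding the delta functions
     z0^{-1} d((x0-y0)/z0)   = sum_l z0^{-l-1} sum_i binom(l,i) (-1)^i x0^{l-i} y0^i
     z0^{-1} d((y0-x0)/-z0)  = sum_l (-1)^l z0^{-l-1} sum_i binom(l,i) (-1)^i y0^{l-i} x0^i
     y0^{-1} d((x0-z0)/y0)   = sum_n y0^{-n-1} sum_i binom(n,i) (-1)^i x0^{n-i} z0^i.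
   Each of the three infinite sums over i has only finitely many nonzero terms
   (by truncation), so equality of the sums is expressed as equality of the
   partial sums for all large enough N. *)
Definition jacobi (V W : lmodType K) (Yi : vop V V) (Yo : vop V W) (P : V -> Prop) :=
  forall u v, P u -> P v -> forall (w : W) (l a b : int) (m p : idx r),
  exists N0 : nat, forall N : nat, (N0 <= N)%N ->
    \sum_(i < N) ((-1) ^+ i * zbin l i)%:~R *:
        Yo u (l + a - (nat_of_ord i)%:Z) m (Yo v (b + (nat_of_ord i)%:Z) (p - m) w)
  - \sum_(i < N) ((-1) ^ l * (-1) ^+ i * zbin l i)%:~R *:
        Yo v (l + b - (nat_of_ord i)%:Z) (p - m) (Yo u (a + (nat_of_ord i)%:Z) m w)
  = \sum_(i < N) ((-1) ^+ i * zbin ((nat_of_ord i)%:Z - a - 1) i)%:~R *: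
        Yo (Yi u (l + (nat_of_ord i)%:Z) m v) (a + b - (nat_of_ord i)%:Z) p w.

Definition is_TVA (V : lmodType K) (Y : vop V V) (one : V) :=
  [/\ coef_linear Y (fun _ => True), truncated Y (fun _ => True), vacuum_id Y one,
      (forall v n m, 0 <= n -> Y v n m one = 0)  (* Y(v;x0,x)1 in V[[x0,x^{+-1}]] *)
    & jacobi Y Y (fun _ => True)].

(* (W, YW) is a module for the toroidal vertex subalgebra of (V,Y,one) with
   underlying subspace P (YW only matters on P) *)
Definition is_module_on (V W : lmodType K) (Y : vop V V) (one : V)
    (P : V -> Prop) (YW : vop V W) :=
  [/\ coef_linear YW P, truncated YW P, vacuum_id YW one & jacobi Y YW P].

Definition is_module (V W : lmodType K) (Y : vop V V) (one : V) (YW : vop V W) :=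
  is_module_on Y one (fun _ => True) YW.

Definition inV0 (V : lmodType K) (Y : vop V V) (one : V) (v : V) :=
  exists s : seq (K * V * int * idx r),
    v = \sum_(t <- s) t.1.1.1 *: Y t.1.1.2 t.1.2 t.2 one.

(* condition (star): for all v, w there is k : int with
   x0^k YW'(v_{-1,m} 1; x0, x) w in x^{-m} W[[x0]] for all m, i.e. the
   coefficient of x0^{-n-1} x^{-m'} vanishes unless m' = m and n < k. *)
Definition cond_star (V W : lmodType K) (Y : vop V V) (one : V) (YW' : vop V W) :=
  forall (v : V) (w : W), exists k : int, forall (m m' : idx r) (n : int),
    (m' != m) || (k <= n) -> YW' (Y v (-1) m one) n m' w = 0.

Definition fsum_eq (W : lmodType K) (f : idx r -> W) (s : W) :=
  exists S : seq (idx r),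
    [/\ uniq S, (forall m, m \notin S -> f m = 0) & s = \sum_(m <- S) f m].

End Defs.

(* The Jacobi identity of a module W, taken with v = 1 and combined with the
   creation property u_{n,m}1 = 0 for n >= 0, collapses to
     (u_{-1,m}1)^W_{n,m'} = [m' = m] u^W_{n,m},
   so Y_W is determined by its restriction to V^0, and condition ( * ) is merely
   the truncation of Y_W.  Conversely, for the V^0-module W one defines Y_W by
   this formula; the Jacobi identity for u, v then is the Jacobi identity of W
   for u_{-1,m}1 and v_{-1,p-m}1, once the vertex algebra identity
   u_{j,m}(v_{-1,p-m}1) = (u_{j,m}v)_{-1,p}1 (Jacobi in V with third vector 1)
   rewrites the right-hand side. *)
From HB Require Import structures.
From mathcomp Require Import all_boot all_order all_algebra.
From mathcomp Require Import zify.
From Stdlib Require Import FunctionalExtensionality.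
Import Order.TTheory GRing.Theory Num.Theory.
Local Open Scope ring_scope.

Set Implicit Arguments.
Unset Strict Implicit.

Lemma zbin0 (n : int) : zbin n 0 = 1.
Proof. by rewrite /zbin big_ord0. Qed.

Lemma zbin_pred_self (k : nat) : (0 < k)%N -> zbin (k%:Z - 0 - 1) k = 0.
Proof.
case: k => [//|k] _; rewrite /zbin big_ord_recr /=.
have -> : (k.+1)%:Z - 0 - 1 - k%:Z = 0 by lia.
by rewrite mulr0 div0z.
Qed.

Lemma big_ord_head (W : zmodType) (N : nat) (F : 'I_N.+1 -> W) :
  (forall i : 'I_N.+1, (0 < i)%N -> F i = 0) -> \sum_(i < N.+1) F i = F ord0.
Proof. by move=> F0; rewrite big_ord_recl big1 ?addr0 // => j _; apply: F0. Qed.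

Section VertexOperators.
Variables (K : fieldType) (r : nat).

Section Linearity.
Variables (V W : lmodType K) (Yo : @vop K r V W) (P : V -> Prop).
Hypothesis linYo : coef_linear Yo P.

Lemma vop0l : P 0 -> forall n m w, Yo 0 n m w = 0.
Proof.
move=> P0 n m w; have := (proj1 linYo) 0 0 1 n m w P0 P0.
rewrite !scale1r addr0 => double.
by apply: (addrI (Yo 0 n m w)); rewrite -double addr0.
Qed.

Lemma vop0r v n m : P v -> Yo v n m 0 = 0.
Proof.
move=> Pv; have := (proj2 linYo) v n m 1 0 0 Pv.
rewrite !scale1r addr0 => double.
by apply: (addrI (Yo v n m 0)); rewrite -double addr0.
Qed.

End Linearity.

Section Translation.
Variables (V : lmodType K) (Y : @vop K r V V) (one : V).
Hypothesis creation : forall v n m, 0 <= n -> Y v n m one = 0.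

Lemma vop_vacuum_translate (W : lmodType K) (Yo : @vop K r V W) :
  coef_linear Yo (fun _ => True) -> vacuum_id Yo one ->
  jacobi Y Yo (fun _ => True) ->
  forall u m m' n w,
    Yo (Y u (-1) m one) n m' w = if m' == m then Yo u n m w else 0.
Proof.
move=> linYo vacYo jacYo u m m' n w.
have [N0 HN] := jacYo u one I I w (-1) n 0 m m'.
have := HN N0.+1 (leqnSn _).
rewrite big_ord_head => [|i i_gt0]; last first.
  rewrite vacYo; case: eqP => [|_]; first lia.
  by rewrite (vop0r linYo) // scaler0.
rewrite big_ord_head => [|i i_gt0]; last first.
  by rewrite vacYo; case: eqP => [|_]; [lia | rewrite scaler0].
rewrite big_ord_head => [|i i_gt0]; last first.
  by rewrite creation; [rewrite (vop0l linYo) // scaler0 | lia].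
(* The i = 0 terms carry the index 0%N%:Z, folded to the ring zero for addr0. *)
rewrite /= -[Posz 0]/(0 : int) !zbin0 !expr0 !mulr1 !vacYo !addr0 eqxx /=.
rewrite subr_eq0 (vop0r linYo) // scaler0 sub0r !scale1r.
have -> : ((-1) ^ (-1) : int) = -1 by [].
case: eqP => [->|_] <-; first by rewrite scaleN1r opprK.
by rewrite scaler0 oppr0.
Qed.

End Translation.

Lemma vop_coef_vacuum_translate (V : lmodType K) (Y : @vop K r V V) (one : V) :
  is_TVA Y one ->
  forall u v j m p, Y u j m (Y v (-1) (p - m) one) = Y (Y u j m v) (-1) p one.
Proof.
move=> [linY _ _ creation jacY] u v j m p.
have [N0 HN] := jacY u v I I one j 0 (-1) m p.
have := HN N0.+1 (leqnSn _).
rewrite big_ord_head => [|i i_gt0]; last first.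
  by rewrite (creation v); [rewrite (vop0r linY) // scaler0 | lia].
rewrite big1 => [|i _]; last first.
  by rewrite (creation u); [rewrite (vop0r linY) // scaler0 | lia].
rewrite big_ord_head => [|i i_gt0]; last first.
  by rewrite zbin_pred_self // mulr0 scale0r.
by rewrite /= -[Posz 0]/(0 : int) !zbin0 !expr0 !mulr1 !scale1r !addr0 subr0.
Qed.

Section ModulesOverV0.
Variables (V W : lmodType K) (Y : @vop K r V V) (one : V).

Lemma inV0_coef v n m : inV0 Y one (Y v n m one).
Proof. by exists [:: (1, v, n, m)]; rewrite big_seq1 scale1r. Qed.

Lemma inV0_0 : inV0 Y one 0.
Proof. by exists [::]; rewrite big_nil. Qed.

Lemma is_module_on_sub (P Q : V -> Prop) (YW : @vop K r V W) :
  (forall v, P v -> Q v) -> is_module_on Y one Q YW -> is_module_on Y one P YW.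
Proof.
move=> PQ [[linV linW] truncW vacW jacW]; split => //.
- by split=> * ; [apply: linV | apply: linW]; apply: PQ.
- by move=> v w /PQ; apply: truncW.
- by move=> u v /PQ Qu /PQ Qv; apply: jacW.
Qed.

Lemma module_cond_star (YW : @vop K r V W) :
  is_TVA Y one -> is_module Y one YW -> cond_star Y one YW.
Proof.
move=> [_ _ _ creation _] [linW truncW vacW jacW] v w.
have [N HN] := truncW v w I; exists N => m m' n /orP[m'm | Nn];
  rewrite (vop_vacuum_translate creation linW vacW jacW).
  by rewrite (negbTE m'm).
by case: eqP => // _; apply: HN.
Qed.

Lemma cond_star_fsum_eq (YW' : @vop K r V W) :
  cond_star Y one YW' ->
  forall v n m w s, fsum_eq (fun m' => YW' (Y v (-1) m' one) n m w) s ->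
  s = YW' (Y v (-1) m one) n m w.
Proof.
move=> star v n m w s [S [uniqS suppS ->]].
have [k Hk] := star v w.
have off_m m' : m' != m -> YW' (Y v (-1) m' one) n m w = 0.
  by move=> m'm; apply: Hk; rewrite eq_sym m'm.
have [mS | mNS] := boolP (m \in S).
  rewrite (big_rem m) //= big1_seq ?addr0 // => x /andP[_ x_rem].
  by apply: off_m; apply: contraTneq x_rem => ->; rewrite mem_rem_uniqF.
rewrite big1_seq ?suppS // => x /andP[_ xS].
by apply: off_m; apply: contraTneq xS => ->.
Qed.

Definition extend_from_V0 (YW' : @vop K r V W) : @vop K r V W :=
  fun v n m w => YW' (Y v (-1) m one) n m w.

Lemma extend_from_V0_fsum_eq (YW' : @vop K r V W) :
  cond_star Y one YW' -> forall v n m w,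
  fsum_eq (fun m' => YW' (Y v (-1) m' one) n m w) (extend_from_V0 YW' v n m w).
Proof.
move=> star v n m w; exists [:: m]; split; rewrite ?big_seq1 // => m'.
by rewrite mem_seq1 => m'm; have [k Hk] := star v w; apply: Hk; rewrite eq_sym m'm.
Qed.

Lemma cond_star_fsum_eq_unique (YW YW' : @vop K r V W) :
  cond_star Y one YW' ->
  (forall v n m w, fsum_eq (fun m' => YW' (Y v (-1) m' one) n m w) (YW v n m w)) ->
  YW = extend_from_V0 YW'.
Proof.
move=> star YWsum; do 4!apply: functional_extensionality_dep => ?.
exact: cond_star_fsum_eq.
Qed.

Lemma extend_from_V0_module (YW' : @vop K r V W) :
  is_TVA Y one -> is_module_on Y one (inV0 Y one) YW' -> cond_star Y one YW' ->
  is_module Y one (extend_from_V0 YW').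
Proof.
move=> TVA [[linV linW] _ vacW' jacW'] star.
have [linY _ vacY creation jacY] := TVA.
split.
- split=> [u v a n m w _ _ | v n m a w w' _]; rewrite /extend_from_V0.
    by rewrite (proj1 linY) // linV //; apply: inV0_coef.
  by rewrite linW //; apply: inV0_coef.
- move=> v w _; have [k Hk] := star v w; exists k => n m kn.
  by apply: Hk; rewrite kn orbT.
- move=> n m w; rewrite /extend_from_V0 vacY eqxx /=.
  have [->|m_neq0] := eqVneq m 0; first by rewrite vacW' eqxx.
  by rewrite (vop0l (conj linV linW)) ?andbF //; apply: inV0_0.
- move=> u v _ _ w l a b m p.
  have [N0 HN] := jacW' _ _ (inV0_coef u (-1) m) (inV0_coef v (-1) (p - m))
    w l a b m p.
  exists N0 => N N0N; rewrite /extend_from_V0 HN //; apply: eq_bigr => i _.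
  by rewrite (vop_vacuum_translate creation linY vacY jacY) eqxx
    (vop_coef_vacuum_translate TVA).
Qed.

End ModulesOverV0.
End VertexOperators.

Unset Implicit Arguments.
Set Strict Implicit.

Theorem proposition2p11 (K : fieldType) (r : nat) (V W : lmodType K)
    (Y : @vop K r V V) (one : V) :
  is_TVA Y one ->
  (forall YW : @vop K r V W, is_module Y one YW ->
      is_module_on Y one (inV0 Y one) YW /\ cond_star Y one YW) /\
  (forall YW' : @vop K r V W,
      is_module_on Y one (inV0 Y one) YW' -> cond_star Y one YW' ->
      (exists YW : @vop K r V W, forall v n m w,
          fsum_eq (fun m' => YW' (Y v (-1) m' one) n m w) (YW v n m w)) /\
      (forall YW : @vop K r V W,
          (forall v n m w,
             fsum_eq (fun m' => YW' (Y v (-1) m' one) n m w) (YW v n m w)) ->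
          is_module Y one YW)).
Proof.
move=> TVA; split=> [YW YWmod | YW' YW'mod star].
  split; last exact: module_cond_star.
  by apply: is_module_on_sub YWmod.
split; first by exists (extend_from_V0 Y one YW'); apply: extend_from_V0_fsum_eq.
move=> YW /(cond_star_fsum_eq_unique star) ->.
exact: extend_from_V0_module.
Qed.
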